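(* Let $m,n,s,k$ be integers such that $2\leqslant s\leqslant n$, $2\leqslant k\leqslant m$ and $ms=nk$. Let $c\geqslant 1$ and let $\Gamma$ be an abelian group of order $nkc$. Then there exists an $\mathrm{MRS}_\Gamma(m,n;s,k;c)$ in each of the following cases: (1) $s\equiv k\equiv 0\pmod 4$; (2) $s\equiv 2\pmod 4$ and $k\equiv 0\pmod 4$; (3) $s\equiv 0\pmod 4$ and $k\equiv 2\pmod 4$; (4) $s\equiv k\equiv 2\pmod 4$ and $m\equiv n\equiv 0\pmod 2$.
   Context: For positive integers $m,n,s,k,c$ and an abelian group $\Gamma$ of order $nkc$, an $\mathrm{MRS}_\Gamma(m,n;s,k;c)$ is a set of $c$ partially filled $m\times n$ arrays (some cells may be empty) with entries in $\Gamma$ such that: every element of $\Gamma$ appears exactly once and in a unique array; in every array each row contains exactly $s$ filled cells and each column contains exactly $k$ filled cells; and there exist $\omega,\delta\in\Gamma$ such that in every array each row sum is $\omega$ and each column sum is $\delta$. *)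

From mathcomp Require Import all_boot all_order all_algebra.
Set Implicit Arguments. Unset Strict Implicit. Unset Printing Implicit Defensive.
Import GRing.Theory.
Local Open Scope ring_scope.

(* A family of c partially filled m x n arrays with entries in the finite
   abelian (additive) group G: A a i j = None means the cell (i,j) of
   array a is empty, A a i j = Some g means it contains g. *)
Definition arrays (G : finZmodType) (m n c : nat) : Type :=
  'I_c -> 'I_m -> 'I_n -> option G.

(* A is an MRS_G(m,n;s,k;c) (the condition #|G| = n k c is a separate
   hypothesis of the theorem). *)
Definition is_MRS (G : finZmodType) (m n s k c : nat) (A : arrays G m n c) : Prop :=
  (forall g : G,
      #|[set t : 'I_c * 'I_m * 'I_n | A t.1.1 t.1.2 t.2 == Some g]| = 1%N) /\
  (forall (a : 'I_c) (i : 'I_m), #|[set j : 'I_n | A a i j != None]| = s) /\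
  (forall (a : 'I_c) (j : 'I_n), #|[set i : 'I_m | A a i j != None]| = k) /\
  (exists omega delta : G,
      (forall (a : 'I_c) (i : 'I_m), \sum_(j : 'I_n) odflt 0 (A a i j) = omega) /\
      (forall (a : 'I_c) (j : 'I_n), \sum_(i : 'I_m) odflt 0 (A a i j) = delta)).

From mathcomp Require Import all_boot all_order all_algebra.
From mathcomp Require Import fingroup morphism quotient pgroup zify ring.
Set Implicit Arguments. Unset Strict Implicit. Unset Printing Implicit Defensive.
Import GRing.Theory.

(* Pick d of order 2 and sigma such that neither sigma nor sigma + d is a
   double y + y; they exist as soon as 4 divides #|G| (Cauchy's theorem, in G
   and in the subgroup of doubles).  Then y |-> y + d and y |-> sigma - y
   generate a Klein four-group acting freely on G, whose #|G|/4 orbits are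
   {y, y + d, sigma - y, sigma - y + d}.
   Number the cells of each array 0, ..., ms - 1, cell e lying in row e / s and
   column e mod n, so that row i consists of the cells is, ..., is + s - 1 and
   column j of the cells j, j + n, ..., j + (k - 1)n.  Write k = 2rM and
   nr = 2p.  Each orbit fills four cells e, e + 1, e + 2p, e + 2p + 1: the
   horizontal pairs have the form {z, sigma - z + d} and sum to sigma + d, the
   vertical pairs (2p = nr apart in one column) have the form {z, sigma - z}
   and sum to sigma.  This needs s even, 2r | k and nr even: the four cases of
   the statement allow r = 2 or r = 1. *)

Section DoublingMap.
Local Open Scope ring_scope.
Variable G : finZmodType.

Definition double_morphism : {morphism [set: G] >-> G} :=
  @Morphism _ _ [set: G] (fun x : G => x + x) (in2W (fun x y => addrACA x y x y)).

Local Notation doubles := (double_morphism @* [set: G])%G.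
Local Notation order2 := ('ker double_morphism)%G.

Lemma card_doubles_ker : (#|doubles| * #|order2| = #|G|)%N.
Proof. by rewrite card_morphim setIid mulnC (Lagrange (subsetT _)) cardsT. Qed.

Lemma mem_order2 x : (x \in order2) = (x + x == 0).
Proof. by rewrite !inE. Qed.

Lemma mem_doubles y : y + y \in doubles.
Proof. exact: (mem_morphim double_morphism (in_setT y) (in_setT y)). Qed.

Lemma order2_zmod (u : G) : #[u]%g = 2%N -> u != 0 /\ u + u = 0.
Proof.
move=> o_u; split; first by rewrite -[u == 0]/(u == 1)%g -order_eq1 o_u.
by have := expg_order u; rewrite o_u.
Qed.

Lemma cycle_order2_sub (u : G) : #[u]%g = 2%N -> <[u]>%g \subset order2.
Proof. by move=> /order2_zmod[_ uu]; rewrite cycle_subG mem_order2 uu. Qed.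

Lemma card_doubles_shift_lt (d : G) : #[d]%g = 2%N -> (4 %| #|G|)%N ->
  (#|doubles :|: [set (u + d)%R | u in doubles]| < #|G|)%N.
Proof.
move=> o_d G4; have order2_ge2 : (2 <= #|order2|)%N.
  by rewrite -o_d subset_leq_card ?cycle_order2_sub.
have doubles_gt0 : (0 < #|doubles|)%N by apply/card_gt0P; exists 0; apply: group1.
have cardG := card_doubles_ker.
have [d_double | d_nodouble] := boolP (d \in doubles).
  have /setUidPl -> : [set u + d | u in doubles] \subset doubles.
    by apply/subsetP => _ /imsetP[u u_double ->]; apply: groupM.
  nia.
have shift_le : (#|[set (u + d)%R | u in doubles]| <= #|doubles|)%N.
  exact: leq_imset_card.
apply: leq_ltn_trans (leq_card_setU _ _).1 _.
apply: leq_ltn_trans (leq_add (leqnn _) shift_le) _.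
suff : (2 < #|order2|)%N by nia.
(* Otherwise order2 = {0, d} and #|doubles| = #|G| / 2 is even, so doubles
   contains an element of order 2, which must be d. *)
rewrite ltn_neqAle order2_ge2 andbT; apply/negP => /eqP order2_2.
have doubles_even : (2 %| #|doubles|)%N.
  by move: G4; rewrite -cardG -order2_2 => /dvdnP[q]; rewrite /dvdn; lia.
have [u u_double o_u] := Cauchy (isT : prime 2) doubles_even.
have cycle_u : <[u]>%g = order2.
  by apply/eqP; rewrite eqEcard cycle_order2_sub //= -order2_2 -o_u.
have d_u : d \in <[u]>%g by rewrite cycle_u mem_order2; case: (order2_zmod o_d) => _ ->.
by case/negP: d_nodouble; apply: (subsetP _ d d_u); rewrite cycle_subG.
Qed.

Lemma exists_free_klein_shift : (4 %| #|G|)%N ->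
  exists sigma d : G, [/\ d != 0, d + d = 0 &
    forall y, y + y != sigma /\ y + y != sigma + d].
Proof.
move=> G4; have G2 : (2 %| #|[set: G]%G|)%N by rewrite cardsT; apply: dvdn_trans G4.
have [d _ o_d] := Cauchy (isT : prime 2) G2; have [dn0 d2] := order2_zmod o_d.
set V := doubles :|: [set u + d | u in doubles].
have [sigma] : exists sigma, sigma \in ~: V.
  by apply/card_gt0P; have := card_doubles_shift_lt o_d G4; rewrite -/V -(cardsC V); lia.
rewrite /V !inE negb_or => /andP[sigma_nodouble sigma_noshift].
exists sigma, d; split=> // y; split.
  by apply: contraNneq sigma_nodouble => <-; apply: mem_doubles.
apply: contraNneq sigma_noshift => yy; apply/imsetP; exists (y + y); first exact: mem_doubles.
by rewrite yy -addrA d2 addr0.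
Qed.

End DoublingMap.

Section KleinAction.
Local Open Scope ring_scope.
Variables (G : finZmodType) (sigma d : G).

Definition klein (y : G) (u : bool * bool) : G :=
  (if u.1 then sigma - y else y) + d *+ u.2.

Lemma klein00 y : klein y (false, false) = y.
Proof. by rewrite /klein addr0. Qed.

Lemma klein_pair y a b b' :
  klein y (a, b) + klein y (~~ a, b') = sigma + d *+ (b + b').
Proof.
rewrite /klein mulrnDr addrACA; congr (_ + _).
by case: a => /=; rewrite ?subrK // addrC subrK.
Qed.

Hypothesis d2 : d + d = 0.

Lemma opp_shift (b : bool) : - (d *+ b) = d *+ b.
Proof. by case: b; [apply/eqP; rewrite eq_sym -addr_eq0 d2 | rewrite oppr0]. Qed.

Lemma add_shift (b b' : bool) : d *+ b + d *+ b' = d *+ (b (+) b').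
Proof. by case: b; case: b' => //=; rewrite ?addr0 ?add0r. Qed.

Lemma kleinA y u v : klein (klein y u) v = klein y (u.1 (+) v.1, u.2 (+) v.2).
Proof.
case: u v => a b [a' b']; rewrite /klein /= -add_shift addrA; congr (_ + _).
case: a'; rewrite /= ?addbT ?addbF //.
by rewrite opprD opp_shift addrA; case: a => //=; rewrite subKr.
Qed.

Lemma kleinK y u : klein (klein y u) u = y.
Proof. by rewrite kleinA !addbb klein00. Qed.

Hypothesis dn0 : d != 0.
Hypothesis sigma_nodouble : forall y, y + y != sigma /\ y + y != sigma + d.

Lemma klein_fix y u : klein y u = y -> u = (false, false).
Proof.
case: u => [[] b] fix_y.
  have yy : y + y = sigma + d *+ b by rewrite -{1}fix_y /klein /= addrAC subrK.
  have [] := sigma_nodouble y.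
  by case: b {fix_y} yy => /= ->; rewrite ?addr0 eqxx.
congr pair; apply/negP => b_set.
by move: fix_y; rewrite /klein /= b_set => /(canRL (addKr y)); rewrite addNr; apply/eqP.
Qed.

Lemma klein_free y u v : klein y u = klein y v -> u = v.
Proof.
move=> uv; have := kleinA y u v; rewrite uv kleinK => /esym/klein_fix.
by case: u v {uv} => [[] []] [[] []].
Qed.

Definition klein_reps :=
  [set y : G | [forall u, enum_rank y <= enum_rank (klein y u)]%N].

Lemma klein_reps_uniq y y' u u' : y \in klein_reps -> y' \in klein_reps ->
  klein y u = klein y' u' -> y = y'.
Proof.
rewrite !inE => /forallP y_min /forallP y'_min yy'.
have y'E : y' = klein y (u.1 (+) u'.1, u.2 (+) u'.2) by rewrite -kleinA yy' kleinK.
have yE : y = klein y' (u'.1 (+) u.1, u'.2 (+) u.2) by rewrite -kleinA -yy' kleinK.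
apply: enum_rank_inj; apply/val_inj/eqP; rewrite eqn_leq.
have := y_min (u.1 (+) u'.1, u.2 (+) u'.2); rewrite -y'E => ->.
by have := y'_min (u'.1 (+) u.1, u'.2 (+) u.2); rewrite -yE.
Qed.

Lemma klein_reps_cover g : exists y u, y \in klein_reps /\ g = klein y u.
Proof.
have [u0 _ u0_min] :=
  @arg_minnP _ (false, false) xpredT (fun u => enum_rank (klein g u) : nat) erefl.
exists (klein g u0), u0; split; last by rewrite kleinK.
by rewrite inE; apply/forallP => u; rewrite kleinA; apply: u0_min.
Qed.

Lemma card_klein_reps : (#|G| <= #|klein_reps| * 4)%N.
Proof.
have -> : 4%N = #|[set: bool * bool]| by rewrite cardsT card_prod card_bool.
rewrite -cardsT -cardsX.
apply: leq_trans (leq_imset_card (fun yu => klein yu.1 yu.2) _); apply: subset_leq_card.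
apply/subsetP => g _; have [y [u [y_rep ->]]] := klein_reps_cover g.
by apply/imsetP; exists (y, u); rewrite // in_setX y_rep in_setT.
Qed.

Lemma klein_transversal Q : #|G| = (4 * Q)%N ->
  exists x : nat -> G, forall q q' u u', (q < Q)%N -> (q' < Q)%N ->
    klein (x q) u = klein (x q') u' -> q = q' /\ u = u'.
Proof.
move=> cardG; have size_reps : size (enum klein_reps) = #|klein_reps| by rewrite cardE.
have lt_reps i : (i < Q)%N -> (i < size (enum klein_reps))%N.
  by have := card_klein_reps; rewrite size_reps cardG; lia.
exists (nth 0 (enum klein_reps)) => q q' u u' /lt_reps q_lt /lt_reps q'_lt.
have x_rep i : (i < size (enum klein_reps))%N -> nth 0 (enum klein_reps) i \in klein_reps.
  by move=> ?; rewrite -mem_enum mem_nth.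
move=> /[dup] xx /(klein_reps_uniq (x_rep _ q_lt) (x_rep _ q'_lt)) xq.
split; last by move: xx; rewrite xq => /klein_free.
by apply/eqP; rewrite -(nth_uniq 0 q_lt q'_lt (enum_uniq (mem klein_reps))) xq.
Qed.

End KleinAction.

Definition fill (G : zmodType) (T : finType) (m n : nat) (row : T -> 'I_m)
    (col : T -> 'I_n) (V : T -> G) (i : 'I_m) (j : 'I_n) : option G :=
  if [pick e | (row e == i) && (col e == j)] is Some e then Some (V e) else None.

Lemma fill_transpose (G : zmodType) (T : finType) m n (row : T -> 'I_m)
    (col : T -> 'I_n) (V : T -> G) i j :
  fill col row V j i = fill row col V i j.
Proof. by rewrite /fill (eq_pick (fun e => andbC _ _)). Qed.

Section FillRow.
Variables (G : zmodType) (T : finType) (m n : nat).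
Variables (row : T -> 'I_m) (col : T -> 'I_n) (V : T -> G).
Hypothesis cell_inj : forall e e', row e = row e' -> col e = col e' -> e = e'.

Lemma fill_cell e : fill row col V (row e) (col e) = Some (V e).
Proof.
rewrite /fill; case: pickP => [e' /andP[/eqP re /eqP ce] | /(_ e)]; last by rewrite !eqxx.
by rewrite (cell_inj re ce).
Qed.

Lemma fill_filled i j : fill row col V i j != None -> exists e, row e = i /\ col e = j.
Proof. by rewrite /fill; case: pickP => // e /andP[/eqP <- /eqP <-]; exists e. Qed.

Variables (i : 'I_m) (L : finType) (line : L -> T).
Hypotheses (line_row : forall l, row (line l) = i) (line_inj : injective line).
Hypothesis line_onto : forall e, row e = i -> exists l, e = line l.

Lemma filled_row : [set j | fill row col V i j != None] = [set col (line l) | l : L].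
Proof.
apply/setP => j; rewrite inE; apply/idP/imsetP => [/fill_filled[e [re <-]] | [l _ ->]].
  by have [l ->] := line_onto re; exists l.
by rewrite -(line_row l) fill_cell.
Qed.

Lemma col_line_inj : injective (fun l => col (line l)).
Proof. by move=> l l' /(cell_inj (etrans (line_row l) (esym (line_row l')))) /line_inj. Qed.

Lemma card_filled_row : #|[set j | fill row col V i j != None]| = #|L|.
Proof. by rewrite filled_row card_imset //; apply: col_line_inj. Qed.

Lemma sum_fill_row : (\sum_j odflt 0 (fill row col V i j) = \sum_l V (line l))%R.
Proof.
rewrite (bigID (mem [set col (line l) | l : L])) /= big_imset; last first.
  by move=> l l' _ _ /col_line_inj.
rewrite [X in (_ + X)%R]big1 ?addr0 => [|j]; last first.
  by rewrite -filled_row inE negbK => /eqP ->.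
by apply: eq_bigr => l _; rewrite -(line_row l) fill_cell.
Qed.

End FillRow.

Section FillCol.
Variables (G : zmodType) (T : finType) (m n : nat).
Variables (row : T -> 'I_m) (col : T -> 'I_n) (V : T -> G).
Hypothesis cell_inj : forall e e', row e = row e' -> col e = col e' -> e = e'.
Variables (j : 'I_n) (L : finType) (line : L -> T).
Hypotheses (line_col : forall l, col (line l) = j) (line_inj : injective line).
Hypothesis line_onto : forall e, col e = j -> exists l, e = line l.

Let cell_inj_t e e' (ce : col e = col e') (re : row e = row e') := cell_inj re ce.

Lemma card_filled_col : #|[set i | fill row col V i j != None]| = #|L|.
Proof.
rewrite -(card_filled_row V cell_inj_t line_col line_inj line_onto).
by apply: eq_card => i; rewrite !inE fill_transpose.
Qed.

Lemma sum_fill_col : (\sum_i odflt 0 (fill row col V i j) = \sum_l V (line l))%R.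
Proof.
rewrite -(sum_fill_row V cell_inj_t line_col line_inj line_onto).
by apply: eq_bigr => i _; rewrite fill_transpose.
Qed.

End FillCol.

Lemma big_nat_offset (G : nmodType) (F : nat -> G) m b :
  (\sum_(m <= t < m + b) F t = \sum_(0 <= j < b) F (m + j)%N)%R.
Proof. by rewrite -{1}[m]add0n big_addn addKn; apply: eq_bigr => j _; rewrite addnC. Qed.

Lemma big_nat_pairs (G : nmodType) (F : nat -> G) a b :
  (\sum_(0 <= t < a * (2 * b)) F t =
   \sum_(0 <= i < a) \sum_(0 <= j < b)
     (F (i * (2 * b) + j)%N + F (i * (2 * b) + j + b)%N))%R.
Proof.
rewrite big_nat_mul; apply: eq_bigr => i _; rewrite big_split /=.
rewrite (@big_cat_nat _ _ _ (i * (2 * b) + b)) ?leq_addr //=; last by rewrite mulSn; lia.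
rewrite (_ : i.+1 * (2 * b) = i * (2 * b) + b + b); last by rewrite mulSn; lia.
rewrite (@big_nat_offset _ F (i * (2 * b))) (@big_nat_offset _ F (i * (2 * b) + b)).
by congr (_ + _)%R; apply: eq_bigr => j _; congr F; lia.
Qed.

Section Construction.
Variables (G : finZmodType) (m n s k c p r M : nat).
Hypotheses (s_gt0 : 0 < s) (s_even : 2 %| s) (s_le_n : s <= n) (ms_nk : m * s = n * k).
Hypotheses (r_gt0 : 0 < r) (nr_2p : n * r = 2 * p) (k_blocks : k = M * (2 * r)).
Hypothesis cardG : #|G| = n * k * c.
Variables (sigma d : G) (x : nat -> G).
Hypothesis d2 : (d + d = 0)%R.
Hypothesis x_free : forall q q' u u', q < c * (p * M) -> q' < c * (p * M) ->
  klein sigma d (x q) u = klein sigma d (x q') u' -> q = q' /\ u = u'.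

(* Writing e = 4pw + 2pa + 2h + b with h < p and a, b < 2, cell e of array a'
   receives klein (x (a' pM + h + pw)) (a (+) b, b); for a = b = 0 the cells
   e, e + 1, e + 2p, e + 2p + 1 thus receive one whole orbit. *)
Definition slot e := e %/ 2 %% p + p * (e %/ 2 %/ p %/ 2).
Definition twist e := (odd (e %/ 2 %/ p) (+) odd e, odd e).
Definition entry a e := klein sigma d (x (a * (p * M) + slot e)) (twist e).

Lemma n_gt0 : 0 < n. Proof. exact: leq_trans s_le_n. Qed.
Lemma p_gt0 : 0 < p. Proof. by have := n_gt0; nia. Qed.
Lemma ms_4pM : m * s = 4 * (p * M).
Proof. by rewrite ms_nk k_blocks; nia. Qed.

Lemma slot_lt e : e < m * s -> slot e < p * M.
Proof.
rewrite ms_4pM /slot => e_lt.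
have : e %/ 2 %/ p %/ 2 < M by rewrite !ltn_divLR ?p_gt0 //; lia.
by have := ltn_pmod (e %/ 2) p_gt0; nia.
Qed.

Lemma slot_twistK e : e =
  2 * (p * (2 * (slot e %/ p) + ((twist e).1 (+) (twist e).2)) + slot e %% p) + (twist e).2.
Proof.
have slot_div : slot e %/ p = e %/ 2 %/ p %/ 2.
  rewrite /slot addnC mulnC divnMDl ?p_gt0 // (@divn_small (e %/ 2 %% p)) ?addn0 //.
  exact: ltn_pmod p_gt0.
have slot_mod : slot e %% p = e %/ 2 %% p by rewrite /slot addnC mulnC modnMDl modn_mod.
rewrite slot_div slot_mod /= addbK.
rewrite {1}(divn_eq e 2) {1}(divn_eq (e %/ 2) p) {1}(divn_eq (e %/ 2 %/ p) 2) !modn2.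
ring.
Qed.

Lemma entry_inj a a' e e' : a < c -> a' < c -> e < m * s -> e' < m * s ->
  entry a e = entry a' e' -> a = a' /\ e = e'.
Proof.
move=> a_lt a'_lt e_lt e'_lt.
have q_lt b f : b < c -> f < m * s -> b * (p * M) + slot f < c * (p * M).
  by move=> b_lt /slot_lt; nia.
case/x_free => [||q_eq tw_eq]; rewrite ?q_lt //.
have pM_gt0 : 0 < p * M by have := slot_lt e_lt; lia.
have a_eq : a = a'.
  move/(congr1 (divn^~ (p * M))): q_eq.
  by rewrite !divnMDl // !divn_small ?addn0 ?slot_lt.
move: q_eq; rewrite a_eq => /addnI slot_eq; split=> //.
by rewrite (slot_twistK e) (slot_twistK e') slot_eq tw_eq.
Qed.

Lemma entry_row_pair a f : (entry a (2 * f) + entry a (2 * f + 1) = sigma + d)%R.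
Proof.
have half_2f : (2 * f) %/ 2 = f by lia.
have half_2f1 : (2 * f + 1) %/ 2 = f by lia.
by rewrite /entry /slot /twist half_2f half_2f1 oddD !oddM /= addbF addbT klein_pair.
Qed.

Lemma entry_col_pair a e : ~~ odd (e %/ 2 %/ p) ->
  (entry a e + entry a (e + 2 * p) = sigma)%R.
Proof.
move=> even_block.
have half : (e + 2 * p) %/ 2 = 1 * p + e %/ 2 by lia.
have block : (e + 2 * p) %/ 2 %/ p = (e %/ 2 %/ p).+1 by rewrite half divnMDl ?p_gt0.
have slot_eq : slot (e + 2 * p) = slot e.
  rewrite /slot block half modnMDl; congr (_ + p * _).
  by move: even_block; set w := _ %/ p; lia.
rewrite /entry slot_eq /twist block oddD oddM /= addbF addNb klein_pair.
by rewrite mulrnDr -mulrnDl d2 mul0rn addr0.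
Qed.

Lemma sum_entry_row a i :
  (\sum_(l < s) entry a (i * s + l) = (sigma + d) *+ (s %/ 2))%R.
Proof.
rewrite -(big_mkord xpredT (fun l => entry a (i * s + l))).
case/dvdnP: s_even => h ->; rewrite (_ : h * 2 = h * (2 * 1)) // big_nat_pairs.
rewrite (_ : h * (2 * 1) %/ 2 = h); last by lia.
rewrite -[h in RHS]subn0 -sumr_const_nat; apply: eq_bigr => f _; rewrite big_nat1.
have -> : i * (h * (2 * 1)) + (f * (2 * 1) + 0 + 1) = 2 * (i * h + f) + 1 by lia.
have -> : i * (h * (2 * 1)) + (f * (2 * 1) + 0) = 2 * (i * h + f) by lia.
exact: entry_row_pair.
Qed.

Lemma sum_entry_col a j : j < n ->
  (\sum_(t < k) entry a (j + n * t) = sigma *+ r *+ M)%R.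
Proof.
move=> j_lt; rewrite -(big_mkord xpredT (fun t => entry a (j + n * t))) k_blocks.
rewrite big_nat_pairs -[M in RHS]subn0 -sumr_const_nat; apply: eq_bigr => b _.
rewrite -[r in RHS]subn0 -sumr_const_nat; apply: eq_big_nat => t /andP[_ t_lt].
have jt_lt : j + n * t < 2 * p by nia.
have -> : j + n * (b * (2 * r) + t + r) = j + n * (b * (2 * r) + t) + 2 * p.
  by rewrite mulnDr nr_2p addnA.
apply: entry_col_pair.
have -> : j + n * (b * (2 * r) + t) = 2 * b * p * 2 + (j + n * t).
  have -> : n * (b * (2 * r) + t) = 2 * b * (n * r) + n * t by ring.
  by rewrite nr_2p; ring.
by rewrite !divnMDl ?p_gt0 // divn_small ?addn0 ?oddM //; lia.
Qed.

Lemma row_lt (e : 'I_(m * s)) : e %/ s < m.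
Proof. by rewrite ltn_divLR. Qed.

Definition cell_row (e : 'I_(m * s)) : 'I_m := Ordinal (row_lt e).
Definition cell_col (e : 'I_(m * s)) : 'I_n := Ordinal (ltn_pmod e n_gt0).

Lemma cell_inj e e' : cell_row e = cell_row e' -> cell_col e = cell_col e' -> e = e'.
Proof.
move=> /(congr1 val) /= row_eq /(congr1 val) /= col_eq; apply: val_inj => /=.
wlog le_ee' : e e' row_eq col_eq / e <= e'.
  by move=> wlog_le; case: (leqP e e') => [|/ltnW] /wlog_le => // ->.
have : n %| e' - e by rewrite -eqn_mod_dvd // col_eq.
have : e' - e < s.
  by rewrite (divn_eq e s) (divn_eq e' s) row_eq ltn_subLR ?leq_add2l ?ltn_pmod //; lia.
by case: (posnP (e' - e)) => [|/dvdn_leq le_n ? /le_n]; lia.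
Qed.

Lemma row_cell_lt (i : 'I_m) (l : 'I_s) : i * s + l < m * s.
Proof. by have := ltn_ord i; have := ltn_ord l; nia. Qed.
Definition row_cell i l : 'I_(m * s) := Ordinal (row_cell_lt i l).

Lemma col_cell_lt (j : 'I_n) (t : 'I_k) : j + n * t < m * s.
Proof. by rewrite ms_nk; have := ltn_ord j; have := ltn_ord t; nia. Qed.
Definition col_cell j t : 'I_(m * s) := Ordinal (col_cell_lt j t).

Lemma row_cellK i l : cell_row (row_cell i l) = i.
Proof. by apply: val_inj; rewrite /= divnMDl // divn_small ?addn0. Qed.

Lemma col_cellK j t : cell_col (col_cell j t) = j.
Proof. by apply: val_inj; rewrite /= addnC mulnC modnMDl modn_small. Qed.

Lemma row_cell_inj i : injective (row_cell i).
Proof. by move=> l l' /(congr1 val) /= /addnI /val_inj. Qed.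

Lemma col_cell_inj j : injective (col_cell j).
Proof.
move=> t t' /(congr1 val) /= /addnI /eqP.
by rewrite eqn_mul2l gtn_eqF ?n_gt0 // => /eqP /val_inj.
Qed.

Lemma row_cell_onto i e : cell_row e = i -> exists l, e = row_cell i l.
Proof. by move=> <-; exists (Ordinal (ltn_pmod e s_gt0)); apply: val_inj; apply: divn_eq. Qed.

Lemma col_cell_onto j e : cell_col e = j -> exists t, e = col_cell j t.
Proof.
have t_lt : e %/ n < k by rewrite ltn_divLR ?n_gt0 // [k * n]mulnC -ms_nk.
move=> <-; exists (Ordinal t_lt); apply: val_inj => /=.
by rewrite addnC [n * _]mulnC -divn_eq.
Qed.

Definition mrs_arrays : arrays G m n c :=
  fun a => fill cell_row cell_col (fun e : 'I_(m * s) => entry a e).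

Lemma mrs_arrays_once g :
  #|[set t : 'I_c * 'I_m * 'I_n | mrs_arrays t.1.1 t.1.2 t.2 == Some g]| = 1.
Proof.
pose F (ae : 'I_c * 'I_(m * s)) := entry ae.1 ae.2.
have F_inj : injective F.
  by move=> [a e] [a' e'] /entry_inj[] // a_eq e_eq; congr pair; apply: val_inj.
have : g \in codom F.
  by apply: inj_card_onto; rewrite // card_prod !card_ord cardG -ms_nk mulnC.
case/codomP => -[a0 e0] ->.
rewrite (_ : [set t | _] = [set (a0, cell_row e0, cell_col e0)]) ?cards1 //.
apply/setP => -[[a i] j]; rewrite !inE /=; apply/eqP/eqP => [aij | [-> -> ->]].
  have /fill_filled[e [ie je]] : mrs_arrays a i j != None by rewrite aij.
  move: aij; rewrite /mrs_arrays -ie -je fill_cell //; last exact: cell_inj.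
  by case=> /(F_inj (a, e) (a0, e0)) [-> ->].
by rewrite /mrs_arrays fill_cell //; apply: cell_inj.
Qed.

Lemma mrs_arrays_MRS : is_MRS s k mrs_arrays.
Proof.
have row_line i := card_filled_row _ cell_inj (row_cellK i) (@row_cell_inj i).
have col_line j := card_filled_col _ cell_inj (col_cellK j) (@col_cell_inj j).
split; [exact: mrs_arrays_once | split; [|split]].
- by move=> a i; rewrite row_line ?card_ord //; apply: row_cell_onto.
- by move=> a j; rewrite col_line ?card_ord //; apply: col_cell_onto.
exists ((sigma + d) *+ (s %/ 2))%R, (sigma *+ r *+ M)%R; split=> a.
  move=> i; rewrite (sum_fill_row _ cell_inj (row_cellK i) (@row_cell_inj i)).
    exact: sum_entry_row.
  exact: row_cell_onto.
move=> j; rewrite (sum_fill_col _ cell_inj (col_cellK j) (@col_cell_inj j)).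
  exact: sum_entry_col.
exact: col_cell_onto.
Qed.

End Construction.

Lemma MRS_exists (G : finZmodType) (m n s k c r : nat) :
  0 < s <= n -> 2 %| s -> m * s = n * k -> 0 < r -> 2 * r %| k -> 2 %| n * r ->
  #|G| = n * k * c -> exists A : arrays G m n c, is_MRS s k A.
Proof.
move=> /andP[s_gt0 s_le_n] s_even ms_nk r_gt0 /dvdnP[M k_blocks] /dvdnP[p nr_2p] cardG.
rewrite [p * 2]mulnC in nr_2p.
have cardG4 : #|G| = 4 * (c * (p * M)).
  rewrite cardG k_blocks (_ : n * (M * (2 * r)) = 2 * M * (n * r)); last by ring.
  by rewrite nr_2p; ring.
have G4 : 4 %| #|G| by rewrite cardG4 dvdn_mulr.
have [sigma [d [dn0 d2 sigma_nodouble]]] := exists_free_klein_shift G4.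
have [x x_free] := klein_transversal d2 dn0 sigma_nodouble cardG4.
eexists; exact: (mrs_arrays_MRS s_gt0 s_even s_le_n ms_nk r_gt0 nr_2p k_blocks
                                cardG d2 x_free).
Qed.

Theorem proposition5p15 (m n s k c : nat) (G : finZmodType) :
  (2 <= s <= n)%N -> (2 <= k <= m)%N -> (m * s = n * k)%N ->
  (1 <= c)%N -> #|G| = (n * k * c)%N ->
  [\/ (s %% 4 = 0 /\ k %% 4 = 0)%N,
      (s %% 4 = 2 /\ k %% 4 = 0)%N,
      (s %% 4 = 0 /\ k %% 4 = 2)%N
    | (s %% 4 = 2 /\ k %% 4 = 2 /\ m %% 2 = 0 /\ n %% 2 = 0)%N] ->
  exists A : arrays G m n c, @is_MRS G m n s k c A.
Proof.
move=> /andP[s_ge2 s_le_n] _ ms_nk _ cardG cases.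
have s_range : 0 < s <= n by rewrite s_le_n andbT (leq_trans _ s_ge2).
have s_even : 2 %| s by case: cases => [[]|[]|[]|[]]; rewrite /dvdn; lia.
have [k4 | k4N] := boolP (4 %| k).
  by apply: (@MRS_exists _ _ _ _ _ _ 2) => //; apply: dvdn_mull.
have k2 : 2 %| k by move: k4N; case: cases => [[]|[]|[]|[]]; rewrite /dvdn; lia.
have n_even : 2 %| n.
  by move: k4N; rewrite /dvdn; case: cases => [[]|[]|[]|[? [? [? ?]]]]; nia.
by apply: (@MRS_exists _ _ _ _ _ _ 1); rewrite ?muln1.
Qed.
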